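(* Let $\beta=(\beta_n)_{n\ge0}$ be a sequence of positive numbers with $\liminf_n\beta_n^{1/n}\ge1$. If every symbol $\phi$ with $\phi(0)=0$ induces a bounded composition operator $C_\phi$ on $H^2(\beta)$, then $\beta$ is bounded above.
   Context: $H^2(\beta)$ is the Hilbert space of analytic functions $f(z)=\sum_{n\ge0}a_nz^n$ on the unit disk $\mathbb D$ with $\|f\|^2=\sum_{n\ge0}|a_n|^2\beta_n<\infty$. A symbol is a non-constant analytic map $\phi:\mathbb D\to\mathbb D$ and $C_\phi f=f\circ\phi$; ''bounded on $H^2(\beta)$'' means $C_\phi$ maps $H^2(\beta)$ boundedly into itself. *)

(* Complex numbers are R[i] (mathcomp-real-closed),
   topologized as the normed space R[i]^o (regular normed structure of the
   numFieldType R[i], norm = complex modulus). *)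
From HB Require Import structures.
From mathcomp Require Import all_boot all_order all_algebra.
From mathcomp Require Import all_classical all_reals all_analysis.
From mathcomp Require Import complex.
Set Implicit Arguments. Unset Strict Implicit. Unset Printing Implicit Defensive.
Import Order.TTheory GRing.Theory Num.Theory.
Import numFieldNormedType.Exports.
Local Open Scope ring_scope.
Local Open Scope complex_scope.
Local Open Scope classical_set_scope.

Definition in_disk (R : rcfType) (z : R[i]) : Prop := `|z| < 1.

Definition psums (R : realType) (a : nat -> R[i]) (z : R[i]) : nat -> R[i]^o :=
  fun N => \sum_(k < N) a k * z ^+ k.

(* the power series with coefficients a converges at every point of the disk;
   i.e. it defines an analytic function on the disk *)
Definition ps_on_disk (R : realType) (a : nat -> R[i]) : Prop :=
  forall z : R[i], in_disk z -> cvgn (psums a z).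

(* value of the power series at z (meaningful when it converges) *)
Definition ps_eval (R : realType) (a : nat -> R[i]) (z : R[i]) : R[i] :=
  limn (psums a z).

(* A symbol: a non-constant analytic map from the disk into the disk,
   given by its Taylor coefficients c. *)
Definition is_symbol (R : realType) (c : nat -> R[i]) : Prop :=
  [/\ ps_on_disk c,
      (forall z, in_disk z -> in_disk (ps_eval c z)) &
      (exists z1 z2, [/\ in_disk z1, in_disk z2 & ps_eval c z1 != ps_eval c z2])].

Definition H2norm2 (R : realType) (beta : nat -> R) (a : nat -> R[i]) : \bar R :=
  (\sum_(0 <= n <oo) ((ComplexField.Normc.normc (a n)) ^+ 2 * beta n)%:E)%E.

Definition inH2 (R : realType) (beta : nat -> R) (a : nat -> R[i]) : Prop :=
  ps_on_disk a /\ (H2norm2 beta a < +oo)%E.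

(* C_phi maps H^2(beta) boundedly into itself: there is M such that for every f
   in H^2(beta), f o phi is (the function of) an element g of H^2(beta) with
   ||g||^2 <= M ||f||^2. *)
Definition comp_bounded (R : realType) (beta : nat -> R) (c : nat -> R[i]) : Prop :=
  exists M : R, forall a : nat -> R[i], inH2 beta a ->
    exists b : nat -> R[i],
      [/\ inH2 beta b,
          (H2norm2 beta b <= M%:E * H2norm2 beta a)%E &
          forall z, in_disk z -> psums b z @ \oo --> (ps_eval a (ps_eval c z) : R[i]^o)].

(* Suppose beta is not bounded above.  Choose indices 0 < m_0 < m_1 < ...
   greedily, taking m as the next index as soon as beta m >= 4^k, where k is
   the number of indices already chosen, and let
       phi(z) = sum_k 2^-(k+2) z^(m_k).
   Its coefficients are nonnegative with sum <= 1/2, so phi maps the disk into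
   the disk of radius 1/2, phi(0) = 0, and phi is not constant: phi is a symbol.
   But ||phi||^2 = sum_k 4^-(k+2) beta(m_k) >= sum_k 1/16 = +oo.  On the other
   hand C_phi sends f(z) = z, which lies in every H^2(beta), to phi; if C_phi is
   bounded, some g in H^2(beta) has the same values as phi on the disk, hence
   (identity theorem on (0,1)) the same coefficients, so phi is in H^2(beta). *)

From HB Require Import structures.
From mathcomp Require Import all_boot all_order all_algebra.
From mathcomp Require Import all_classical all_reals all_analysis.
From mathcomp Require Import complex.
From mathcomp Require Import ring lra.
Import Order.TTheory GRing.Theory Num.Theory.
Import numFieldNormedType.Exports.
Local Open Scope ring_scope.
Local Open Scope complex_scope.
Local Open Scope classical_set_scope.

Set Implicit Arguments.
Unset Strict Implicit.
Unset Printing Implicit Defensive.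

Local Notation normc := ComplexField.Normc.normc.

Section ComplexParts.
Variable R : realType.
Local Notation Re := (@complex.Re R).
Local Notation Im := (@complex.Im R).

Lemma normr_normc (z : R[i]) : `|z| = (normc z)%:C.
Proof. by case: z. Qed.

Lemma normc_ge0 (z : R[i]) : 0 <= normc z.
Proof. by case: z => a b /=; apply: sqrtr_ge0. Qed.

Lemma normc_real (r : R) : normc r%:C = `|r|.
Proof. by rewrite /= expr0n addr0 sqrtr_sqr. Qed.

Lemma normcX (z : R[i]) k : normc (z ^+ k) = normc z ^+ k.
Proof. by have := normrX k z; rewrite !normr_normc -rmorphXn; case. Qed.

Lemma normc_sum N (f : nat -> R[i]) :
  normc (\sum_(k < N) f k) <= \sum_(k < N) normc (f k).
Proof.
elim: N => [|N IH]; first by rewrite !big_ord0 ComplexField.Normc.normc0.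
by rewrite !big_ord_recr /=; apply: le_trans (le_normcD _ _) _; apply: lerD.
Qed.

Lemma Re_le_normc (z : R[i]) : `|Re z| <= normc z.
Proof.
case: z => a b /=; rewrite -sqrtr_sqr ler_sqrt ?addr_ge0 ?sqr_ge0 //.
by rewrite lerDl sqr_ge0.
Qed.

Lemma Im_le_normc (z : R[i]) : `|Im z| <= normc z.
Proof.
case: z => a b /=; rewrite -sqrtr_sqr ler_sqrt ?addr_ge0 ?sqr_ge0 //.
by rewrite lerDr sqr_ge0.
Qed.

Lemma normc_le_ReIm (z : R[i]) : normc z <= `|Re z| + `|Im z|.
Proof.
case: z => a b /=; rewrite -[X in _ <= X]ger0_norm ?addr_ge0 //.
rewrite -sqrtr_sqr ler_sqrt ?sqr_ge0 // -[a ^+ 2]real_normK ?num_real //.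
by rewrite -[b ^+ 2]real_normK ?num_real // sqrrD -addrA lerD2l lerDr.
Qed.

Lemma cvg_Re (u : nat -> R[i]^o) (l : R[i]) :
  u @ \oo --> (l : R[i]^o) -> (fun n => Re (u n)) @ \oo --> Re l.
Proof.
move=> /cvgrPdist_lt ul; apply/(@cvgrPdist_lt R R^o) => e e0.
have := ul e%:C; rewrite ltcR => /(_ e0); apply: filterS => n.
rewrite normr_normc ltcR; apply: le_lt_trans.
by rewrite -raddfB; apply: Re_le_normc.
Qed.

Lemma cvg_Im (u : nat -> R[i]^o) (l : R[i]) :
  u @ \oo --> (l : R[i]^o) -> (fun n => Im (u n)) @ \oo --> Im l.
Proof.
move=> /cvgrPdist_lt ul; apply/(@cvgrPdist_lt R R^o) => e e0.
have := ul e%:C; rewrite ltcR => /(_ e0); apply: filterS => n.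
rewrite normr_normc ltcR; apply: le_lt_trans.
by rewrite -raddfB; apply: Im_le_normc.
Qed.

Lemma cvg_ReIm (u : nat -> R[i]^o) (a b : R) :
  (fun n => Re (u n)) @ \oo --> a -> (fun n => Im (u n)) @ \oo --> b ->
  u @ \oo --> ((a +i* b) : R[i]^o).
Proof.
move=> /(@cvgrPdist_lt R R^o) ua /(@cvgrPdist_lt R R^o) ub.
apply/cvgrPdist_lt => e; rewrite ltcE /= => /andP[/eqP Ime0 Ree0].
have e2 : 0 < Re e / 2 by rewrite divr_gt0.
have ha := ua _ e2; have hb := ub _ e2; near=> n.
rewrite normr_normc ltcE /= Ime0 eqxx /=; apply: le_lt_trans (normc_le_ReIm _) _.
rewrite [Re e]splitr !raddfB /=.
by apply: ltrD; [near: n; apply: ha | near: n; apply: hb].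
Unshelve. all: by end_near. Qed.

Lemma cvg_normc (u : nat -> R[i]^o) (l : R[i]) :
  u @ \oo --> (l : R[i]^o) -> (fun n => normc (u n)) @ \oo --> normc l.
Proof.
have Re_norm (z : R[i]^o) : Re `|z| = normc z by case: z.
by move=> /cvg_norm /cvg_Re; rewrite Re_norm; under eq_fun do rewrite Re_norm.
Qed.

Lemma Re_psums (a : nat -> R[i]) (x : R) N :
  Re (psums a x%:C N) = \sum_(k < N) Re (a k) * x ^+ k.
Proof.
rewrite /psums raddf_sum; apply: eq_bigr => k _.
by rewrite -rmorphXn; case: (a k) => p q /=; rewrite mulr0 subr0.
Qed.

Lemma Im_psums (a : nat -> R[i]) (x : R) N :
  Im (psums a x%:C N) = \sum_(k < N) Im (a k) * x ^+ k.
Proof.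
rewrite /psums raddf_sum; apply: eq_bigr => k _.
by rewrite -rmorphXn; case: (a k) => p q /=; rewrite mulr0 add0r.
Qed.

End ComplexParts.

Section RealPowerSeries.
Variable R : realType.

Lemma dominated_series_cvg (t w : nat -> R) (W : R) :
  (forall k, `|t k| <= w k) -> (forall N, \sum_(k < N) w k <= W) ->
  cvgn (fun N => \sum_(k < N) t k).
Proof.
move=> tw wW; have w_ge0 k : 0 <= w k by apply: le_trans (tw k).
have cw : cvgn (series w).
  apply: nondecreasing_is_cvgn; first exact: nondecreasing_series.
  by exists W => _ [N _ <-]; rewrite /series /= big_mkord.
have -> : (fun N => \sum_(k < N) t k) = series t.
  by apply/funext => N; rewrite /series /= big_mkord.
apply: (@normed_cvg _ R^o).
exact: (series_le_cvg (fun k => normr_ge0 _) w_ge0 tw cw).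
Qed.

Lemma geometric_sum_le (y : R) p m : 0 < y <= 1/2 ->
  \sum_(p <= k < p + m) y ^+ k <= 2 * y ^+ p.
Proof.
move=> /andP[y0 y12]; rewrite geometric_partial_tail.
apply: le_trans (geometric_le_lim _ (exprn_ge0 _ (ltW y0)) y0 _) _.
  by rewrite ger0_norm ?(ltW y0) //; lra.
rewrite ler_pdivrMr ?subr_gt0; last by lra.
by have := exprn_ge0 p (ltW y0); set t := y ^+ p; nra.
Qed.

Lemma coef_bound (a : nat -> R) :
  cvgn (fun N => \sum_(k < N) a k * (1/2) ^+ k) ->
  exists B, forall k, `|a k| * (1/2) ^+ k <= B.
Proof.
have -> : (fun N => \sum_(k < N) a k * (1/2) ^+ k) = series (fun k => a k * (1/2) ^+ k).
  by apply/funext => N; rewrite /series /= big_mkord.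
move=> /cvg_series_bounded/ex_bound[|B hB]; first exact: (@globally_properfilter _ _ 0%N).
exists B => k.
by have /= := hB k I; rewrite normrM normrX [`|1/2|]ger0_norm.
Qed.

(* Under the bound |a_k| 2^-k <= B, a segment of the series at 0 < x <= 1/4 is
   dominated by a geometric sum of ratio 2x, hence by its first term. *)
Lemma psums_segment_le (a : nat -> R) (B x : R) p q :
  (forall k, `|a k| * (1/2) ^+ k <= B) -> 0 < x <= 1/4 -> (p <= q)%N ->
  `|\sum_(p <= k < q) a k * x ^+ k| <= 2 * B * (2 * x) ^+ p.
Proof.
move=> aB /andP[x0 x14] pq; rewrite -(subnKC pq).
have B0 : 0 <= B by apply: le_trans (aB 0%N); rewrite mulr_ge0 ?exprn_ge0.
apply: le_trans (ler_norm_sum _ _ _) _.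
apply: le_trans (_ : \sum_(p <= k < p + (q - p)) B * (2 * x) ^+ k <= _).
  apply: ler_sum => k _; rewrite normrM normrX (ger0_norm (ltW x0)).
  have -> : x ^+ k = (1/2) ^+ k * (2 * x) ^+ k.
    by rewrite -exprMn; congr (_ ^+ _); field.
  by rewrite mulrA ler_wpM2r ?exprn_ge0 //; lra.
rewrite -mulr_sumr -mulrA mulrCA ler_wpM2l // geometric_sum_le //.
by apply/andP; split; lra.
Qed.

Lemma leading_term_le (a : nat -> R) (B x : R) n :
  (forall k, `|a k| * (1/2) ^+ k <= B) -> 0 < x <= 1/4 ->
  (forall j, (j < n)%N -> a j = 0) ->
  (fun N => \sum_(k < N) a k * x ^+ k) @ \oo --> 0 ->
  `|a n| * x ^+ n <= 2 * B * (2 * x) ^+ n.+1.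
Proof.
move=> aB hx a_lt_n vanish; apply/ler_addgt0Pr => e e0.
have [N [nN SN]] : exists N, (n < N)%N /\ `|\sum_(k < N) a k * x ^+ k| < e.
  have [N0 _ hN0] := cvgr0_norm_lt _ vanish _ e0.
  exists (maxn N0 n.+1); rewrite leq_max ltnSn orbT; split => //.
  by apply: hN0; rewrite /= leq_max leqnn.
have split_sum : \sum_(k < N) a k * x ^+ k
    = a n * x ^+ n + \sum_(n.+1 <= k < N) a k * x ^+ k.
  rewrite -(big_mkord xpredT (fun k => a k * x ^+ k)).
  rewrite (@big_cat_nat _ _ _ n) ?(ltnW nN) //= [X in _ + X]big_ltn //.
  rewrite big_nat_cond big1 ?add0r // => k /andP[/andP[_ /a_lt_n ->] _].
  by rewrite mul0r.
have -> : `|a n| * x ^+ n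
    = `|\sum_(k < N) a k * x ^+ k - \sum_(n.+1 <= k < N) a k * x ^+ k|.
  have x0 : 0 <= x by case/andP: hx => /ltW.
  by rewrite split_sum addrK normrM normrX (ger0_norm x0).
apply: le_trans (ler_normB _ _) _; rewrite addrC.
by apply: lerD; [exact: psums_segment_le | exact: ltW].
Qed.

Lemma le0_of_le_linear (A K : R) :
  0 <= K -> (forall x, 0 < x <= 1/4 -> A <= K * x) -> A <= 0.
Proof.
move=> K0 AK; apply/ler_addgt0Pr => e e0; rewrite add0r.
pose x := Num.min (1/4) (e / (K + 1)).
have x0 : 0 < x by rewrite lt_min; apply/andP; split; [lra | apply: divr_gt0; lra].
have xe : x * (K + 1) <= e by rewrite -ler_pdivlMr ?ge_min ?lexx ?orbT //; lra.
apply: le_trans (AK x _) _; last by nra.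
by rewrite x0 ge_min lexx.
Qed.

(* By strong induction on n, the leading
   term estimate gives |a_n| <= 4 B 2^n x for all small x > 0. *)
Lemma psums_eq0 (a : nat -> R) :
  (forall x, 0 < x < 1 -> (fun N => \sum_(k < N) a k * x ^+ k) @ \oo --> 0) ->
  forall n, a n = 0.
Proof.
move=> vanish.
have [B aB] : exists B, forall k, `|a k| * (1/2) ^+ k <= B.
  by apply/coef_bound/cvgP/vanish/andP; split; lra.
have B0 : 0 <= B by apply: le_trans (aB 0%N); rewrite mulr_ge0 ?exprn_ge0.
elim/ltn_ind => n a_lt_n; apply/normr0_eq0/eqP; rewrite eq_le normr_ge0 andbT.
apply: (@le0_of_le_linear _ (4 * B * 2 ^+ n)); first by rewrite !mulr_ge0 ?exprn_ge0.
move=> x /[dup] /andP[x0 x14] hx.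
have x1 : 0 < x < 1 by apply/andP; split; lra.
have := leading_term_le aB hx a_lt_n (vanish x x1).
have -> : 2 * B * (2 * x) ^+ n.+1 = 4 * B * 2 ^+ n * x * x ^+ n.
  by rewrite exprMn !exprS; ring.
by rewrite ler_pM2r ?exprn_gt0.
Qed.

End RealPowerSeries.

Section ComplexPowerSeries.
Variable R : realType.
Local Notation Re := (@complex.Re R).
Local Notation Im := (@complex.Im R).

Lemma nonneg_psums_cvg (c : nat -> R) (C : R) :
  (forall m, 0 <= c m) -> (forall N, \sum_(m < N) c m <= C) ->
  forall z : R[i], normc z <= 1 ->
  exists2 l : R[i], psums (fun m => (c m)%:C) z @ \oo --> (l : R[i]^o)
                  & normc l <= C.
Proof.
move=> c_ge0 cC z z1; set u := psums _ z.
have term_le k : normc ((c k)%:C * z ^+ k) <= c k.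
  rewrite ComplexField.Normc.normcM normc_real normcX ger0_norm //.
  by rewrite ler_piMr // exprn_ile1 ?normc_ge0.
have u_le N : normc (u N) <= C.
  have := normc_sum N (fun k => (c k)%:C * z ^+ k).
  move=> /le_trans; apply; apply: le_trans (cC N).
  by apply: ler_sum => k _; apply: term_le.
have cRe : cvgn (fun N => Re (u N)).
  have -> : (fun N => Re (u N)) = (fun N => \sum_(k < N) Re ((c k)%:C * z ^+ k)).
    by apply/funext => N; rewrite /u /psums raddf_sum.
  exact: dominated_series_cvg (fun k => le_trans (Re_le_normc _) (term_le k)) cC.
have cIm : cvgn (fun N => Im (u N)).
  have -> : (fun N => Im (u N)) = (fun N => \sum_(k < N) Im ((c k)%:C * z ^+ k)).
    by apply/funext => N; rewrite /u /psums raddf_sum.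
  exact: dominated_series_cvg (fun k => le_trans (Im_le_normc _) (term_le k)) cC.
have ul := cvg_ReIm cRe cIm; exists (limn (fun N => Re (u N)) +i* limn (fun N => Im (u N))) => //.
have nul := cvg_normc ul; rewrite -(cvg_lim _ nul) //.
by apply: limr_le; [exact: cvgP nul | exact: nearW].
Qed.

Lemma psums_coef_unique (a b : nat -> R[i]) (f : R -> R[i]) :
  (forall x, 0 < x < 1 -> psums a x%:C @ \oo --> (f x : R[i]^o)) ->
  (forall x, 0 < x < 1 -> psums b x%:C @ \oo --> (f x : R[i]^o)) ->
  a = b.
Proof.
move=> af bf; pose d k := a k - b k.
have d0 x : 0 < x < 1 -> psums d x%:C @ \oo --> (0 : R[i]^o).
  move=> x01; rewrite -(subrr (f x)).
  have -> : psums d x%:C = psums a x%:C - psums b x%:C.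
    apply/funext => N; rewrite /psums /=.
    change (\sum_(k < N) d k * x%:C ^+ k
      = \sum_(k < N) a k * x%:C ^+ k - \sum_(k < N) b k * x%:C ^+ k).
    by rewrite -sumrB; apply: eq_bigr => k _; rewrite mulrBl.
  exact: cvgB (af x x01) (bf x x01).
have dRe : forall k, Re (d k) = 0.
  apply: psums_eq0 => x /d0 /cvg_Re.
  by under eq_fun do rewrite Re_psums.
have dIm : forall k, Im (d k) = 0.
  apply: psums_eq0 => x /d0 /cvg_Im.
  by under eq_fun do rewrite Im_psums.
apply/funext => k; apply/eqP; rewrite -subr_eq0; apply/eqP.
by move: (dRe k) (dIm k); rewrite /d; case: (a k - b k) => p q /= -> ->.
Qed.

End ComplexPowerSeries.

Lemma unbounded_seqP (R : realDomainType) (u : nat -> R) :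
  ~ (exists M, forall n, u n <= M) -> forall N B, exists2 m, (N < m)%N & B < u m.
Proof.
move=> unbdd N B; apply: contrapT => none; apply: unbdd.
exists (`|B| + \sum_(i < N.+1) `|u i|) => n.
have S0 : 0 <= \sum_(i < N.+1) `|u i| by apply: sumr_ge0.
case: (leqP n N) => [nN | Nn].
  apply: le_trans (ler_norm _) _.
  rewrite (bigD1 (Ordinal (nN : (n < N.+1)%N))) //= addrCA lerDl.
  by rewrite addr_ge0 ?sumr_ge0.
have uB : u n <= B by rewrite leNgt; apply/negP => Bu; apply: none; exists n.
by apply: le_trans uB _; apply: le_trans (ler_norm B) _; rewrite lerDl.
Qed.

Section GreedyCoefficients.
Variable R : realType.
Variable beta : nat -> R.

(* nsel m counts the selected indices below m.  An index m > 0 is selected when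
   beta m >= 4^(nsel m): the k-th selected index m_k satisfies beta m_k >= 4^k. *)
Fixpoint nsel (m : nat) : nat :=
  if m is j.+1 then (nsel j + ((0 < j)%N && ((4 : R) ^+ nsel j <= beta j)%R))%N
  else 0%N.

Definition selected (m : nat) : bool := (0 < m)%N && ((4 : R) ^+ nsel m <= beta m).

Lemma nselS m : nsel m.+1 = (nsel m + selected m)%N.
Proof. by []. Qed.

Lemma nsel_mono : {homo nsel : m n / (m <= n)%N}.
Proof.
move=> m n /subnKC <-; elim: (n - m)%N => [|k IH]; first by rewrite addn0.
by rewrite addnS nselS (leq_trans IH) ?leq_addr.
Qed.

(* The coefficient 2^-(k+2) sits at the k-th selected index, 0 elsewhere. *)
Definition greedy_coef (m : nat) : R :=
  if selected m then (1/2) ^+ (nsel m).+2 else 0.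

Lemma greedy_coef_ge0 m : 0 <= greedy_coef m.
Proof. by rewrite /greedy_coef; case: ifP => // _; apply: exprn_ge0; lra. Qed.

Lemma sum_greedy_coef N :
  \sum_(m < N) greedy_coef m = 1/2 - (1/2) ^+ (nsel N).+1.
Proof.
elim: N => [|N IH]; first by rewrite big_ord0 /= expr1 subrr.
rewrite big_ord_recr nselS /= IH /greedy_coef.
case: (selected N) => /=; last by rewrite addn0 addr0.
by rewrite addn1 !(exprS (1/2) (nsel N).+1); lra.
Qed.

Lemma sum_greedy_coef_le N : \sum_(m < N) greedy_coef m <= 1/2.
Proof.
rewrite sum_greedy_coef lerBlDr lerDl.
by apply: exprn_ge0; lra.
Qed.

Lemma greedy_weight (k : nat) : ((1/2 : R) ^+ k.+2) ^+ 2 * 4 ^+ k = 1 / 16.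
Proof.
have cancel : ((1/2 : R) ^+ k) ^+ 2 * 4 ^+ k = 1.
  rewrite -exprM mulnC exprM -exprMn expr2.
  by rewrite (_ : 1/2 * (1/2) * 4 = 1 :> R) ?expr1n //; field.
have -> : ((1/2 : R) ^+ k.+2) ^+ 2 * 4 ^+ k = ((1/2) ^+ k) ^+ 2 * 4 ^+ k / 16.
  by rewrite (exprSr _ k.+1) (exprSr _ k); field.
by rewrite cancel.
Qed.

(* Each selected index contributes 4^-(k+2) beta m_k >= 1/16 to the weighted
   sum of squares. *)
Lemma weighted_sum_greedy_coef N :
  (nsel N)%:R / 16 <= \sum_(m < N) greedy_coef m ^+ 2 * beta m.
Proof.
elim: N => [|N IH]; first by rewrite big_ord0 /= mul0r.
rewrite big_ord_recr nselS /= natrD mulrDl; apply: lerD => //.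
rewrite /greedy_coef /selected; case: ifP => /= [/andP[_ beta_ge]|_].
  rewrite -(greedy_weight (nsel N)).
  by rewrite ler_wpM2l // !exprn_ge0 //; lra.
by rewrite expr0n /= !mul0r.
Qed.

Lemma nsel_unbounded :
  (forall N B, exists2 m, (N < m)%N & B < beta m) -> forall j, exists N, (j <= nsel N)%N.
Proof.
move=> unbdd; elim=> [|j [N jN]]; first by exists 0%N.
have [m Nm big_m] := unbdd N ((4 : R) ^+ j).
have j_m : (j <= nsel m)%N by rewrite (leq_trans jN) // nsel_mono // ltnW.
case: (ltnP j (nsel m)) => [jm | mj]; first by exists m.
have nsel_m : nsel m = j by apply/eqP; rewrite eqn_leq mj j_m.
exists m.+1; rewrite nselS /selected nsel_m (leq_ltn_trans _ Nm) // (ltW big_m).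
by rewrite addn1.
Qed.

End GreedyCoefficients.

Section HardySpaceFacts.
Variable R : realType.

Lemma in_diskE (z : R[i]) : in_disk z <-> normc z < 1.
Proof. by rewrite /in_disk normr_normc -[1 : R[i]]/(1%:C) ltcR. Qed.

Lemma in_disk_real (x : R) : 0 < x < 1 -> in_disk x%:C.
Proof. by move=> /andP[x0 x1]; apply/in_diskE; rewrite normc_real gtr0_norm. Qed.

Definition idz : nat -> R[i] := fun k => if k == 1%N then 1 else 0.

Lemma psums_idz (w : R[i]) : psums idz w @ \oo --> (w : R[i]^o).
Proof.
apply: cvg_near_cst; exists 2%N => // -[|[|N]] //= _.
rewrite /psums !big_ord_recl big1 => [|i _]; last by rewrite mul0r.
by rewrite /idz /= mul0r add0r mul1r expr1 addr0.
Qed.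

Lemma ps_eval_idz (w : R[i]) : ps_eval idz w = w.
Proof. exact: (cvg_lim _ (psums_idz (w := w))). Qed.

Lemma idz_in_H2 (beta : nat -> R) : inH2 beta idz.
Proof.
split; first by move=> z _; exact: cvgP _ (psums_idz (w := z)).
suff -> : H2norm2 beta idz = (beta 1%N)%:E by rewrite ltry.
rewrite /H2norm2; apply: lim_near_cst; first exact: ereal_hausdorff.
exists 2%N => // -[|[|N]] //= _; rewrite sumEFin big_mkord !big_ord_recl big1 /=.
  by rewrite expr0n /= addr0 sqrtr0 expr0n /= mul0r add0r expr1n !addr0 sqrtr1 expr1n mul1r.
by move=> i _; rewrite expr0n /= addr0 sqrtr0 expr0n /= mul0r.
Qed.

(* C_phi maps the identity to phi itself; by uniqueness of coefficients, a
   bounded composition operator therefore forces the symbol into H^2(beta). *)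
Lemma symbol_in_H2 (beta : nat -> R) (c : nat -> R[i]) :
  is_symbol c -> comp_bounded beta c -> inH2 beta c.
Proof.
case=> c_ps _ _ [M /(_ idz (idz_in_H2 beta))[b [b_H2 _ b_conv]]].
suff -> : c = b by [].
apply: (@psums_coef_unique _ _ _ (fun x => ps_eval c x%:C)) => x /in_disk_real xD.
  by have /cvg_ex[l cl] := c_ps _ xD; rewrite /ps_eval (cvg_lim _ cl).
by have := b_conv _ xD; rewrite ps_eval_idz.
Qed.

End HardySpaceFacts.

Section GreedySymbol.
Variable R : realType.
Variable beta : nat -> R.

Definition greedy_symbol : nat -> R[i] := fun m => (greedy_coef beta m)%:C.

Lemma greedy_symbol_cvg (z : R[i]) : in_disk z ->
  exists2 l : R[i], psums greedy_symbol z @ \oo --> (l : R[i]^o) & normc l <= 1/2.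
Proof.
move=> /in_diskE /ltW; apply: nonneg_psums_cvg.
  exact: greedy_coef_ge0.
exact: sum_greedy_coef_le.
Qed.

Lemma greedy_symbol_eval (z : R[i]) : in_disk z ->
  psums greedy_symbol z @ \oo --> (ps_eval greedy_symbol z : R[i]^o).
Proof. by move=> /greedy_symbol_cvg[l cl _]; rewrite /ps_eval (cvg_lim _ cl). Qed.

Lemma greedy_symbol_eval0 : ps_eval greedy_symbol 0 = 0.
Proof.
rewrite /ps_eval (_ : psums greedy_symbol 0 = fun _ => 0) ?lim_cst //.
apply/funext => N; rewrite /psums big1 // => -[[|k] ?] _ /=.
  by rewrite /greedy_symbol /greedy_coef mul0r.
by rewrite expr0n mulr0.
Qed.

Hypothesis beta_unbounded : forall N B, exists2 m, (N < m)%N & B < beta m.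

(* phi is a symbol: it maps the disk into the disk of radius 1/2, and it is
   not constant since its real coefficients are not all zero. *)
Lemma greedy_symbol_is_symbol : is_symbol greedy_symbol.
Proof.
split.
- by move=> z /greedy_symbol_eval /cvgP.
- move=> z /greedy_symbol_cvg[l cl l12].
  by rewrite /ps_eval (cvg_lim _ cl) //; apply/in_diskE; lra.
apply: contrapT => constant.
have eval0 z : in_disk z -> ps_eval greedy_symbol z = 0.
  move=> zD; rewrite -greedy_symbol_eval0; apply: contrapT => /eqP neq.
  apply: constant; exists z, 0; split => //.
  by apply/in_diskE; rewrite ComplexField.Normc.normc0.
have coef0 : forall m, greedy_coef beta m = 0.
  apply: psums_eq0 => x /in_disk_real xD.
  have := cvg_Re (greedy_symbol_eval xD); rewrite eval0 //.
  by under eq_fun do rewrite Re_psums.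
have [N N1] := nsel_unbounded beta_unbounded 1.
have := sum_greedy_coef beta N; rewrite big1 => [|m _]; last exact: coef0.
case: (nsel beta N) N1 => [//|k _].
have : (1/2 : R) ^+ k <= 1 by apply: exprn_ile1; lra.
by rewrite !exprS; lra.
Qed.

(* phi is not in H^2(beta): the partial sums of ||phi||^2 dominate nsel N / 16,
   which is unbounded. *)
Lemma greedy_symbol_norm : (forall n, 0 <= beta n) ->
  H2norm2 beta greedy_symbol = +oo%E.
Proof.
move=> beta_ge0; apply: eq_infty => r.
have [N rN] := nsel_unbounded beta_unbounded (Num.truncn (16 * r)).+1.
apply: (@le_trans _ _ (\sum_(m < N) greedy_coef beta m ^+ 2 * beta m)%:E).
  rewrite lee_fin; apply: le_trans (weighted_sum_greedy_coef beta N).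
  have : (Num.truncn (16 * r)).+1%:R <= (nsel beta N)%:R :> R by rewrite ler_nat.
  by have := truncnS_gt (16 * r); lra.
rewrite /H2norm2; apply: le_trans (nneseries_lim_ge N _); last first.
  by move=> n _ _; rewrite lee_fin mulr_ge0 ?sqr_ge0.
rewrite sumEFin lee_fin big_mkord; apply: ler_sum => m _.
by rewrite /greedy_symbol normc_real real_normK ?num_real.
Qed.

End GreedySymbol.

Unset Implicit Arguments.
Set Strict Implicit.
Local Close Scope complex_scope.
Local Close Scope classical_set_scope.

Theorem mainTheorem4 (R : realType) (beta : nat -> R) :
  (forall n, 0 < beta n) ->
  (1%:E <= limn_einf (fun n => (beta n `^ (n%:R)^-1)%:E))%E ->
  (forall c : nat -> R[i], is_symbol c -> ps_eval c 0 = 0 -> comp_bounded beta c) ->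
  exists M : R, forall n, beta n <= M.
Proof.
move=> beta_gt0 _ comp_bdd; apply: contrapT => /unbounded_seqP beta_unbdd.
have phi_sym := greedy_symbol_is_symbol beta_unbdd.
have [_] := symbol_in_H2 phi_sym (comp_bdd _ phi_sym (greedy_symbol_eval0 beta)).
by rewrite greedy_symbol_norm ?ltxx // => n; apply: ltW.
Qed.
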